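(* Consider any run of shadow moat growing on $(G,t)$ with final growth values $(y_S)$, and any tree $T$ in $G$ with leaf set $S'\subseteq V$. Then $$\mathrm{UM}(T)\ \ge\ c(T)-\sum_{S\subseteq V:\ S\odot S'} y_S .$$
   Context: $G=(V,E,c)$ is an undirected graph with edge costs $c\ge0$; $\delta(S)$ is the set of edges with exactly one endpoint in $S$; $c(T)=\sum_{e\in T}c_e$. Shadow moat growing on $(G,t)$, $t:V\to\mathbb{R}_{\ge0}$: continuous process in time maintaining a forest (initially empty), its components, and $y_S\ge0$ (initially $0$); at time $\tau$ a component $C$ is active iff some $w\in C$ has $t_w>\tau$, and each active $C$ increases $y_C$ at rate $1$; an edge $e$ between different components with $\sum_{S:e\in\delta(S)}y_S=c_e$ is added and the components merge; stop when nothing is active. In every run $\sum_{S:e\in\delta(S)}y_S\le c_e$ for all edges. For $S,A\subseteq V$, $S\odot A$ means $S\cap A\neq\emptyset$ and $A\not\subseteq S$. For a forest $F$: $\mathrm{UC}(F)=\sum_{e\in F}\big(c_e-\sum_{S:e\in\delta(S)}y_S\big)$; $\mathrm{MC}(F)=\sum_{S:\,|\delta(S)\cap F|\ge2}|\delta(S)\cap F|\,y_S$; $\mathrm{UM}(F)=\mathrm{UC}(F)+\mathrm{MC}(F)$. *)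

From mathcomp Require Import all_boot all_order all_algebra.
Set Implicit Arguments. Unset Strict Implicit. Unset Printing Implicit Defensive.
Import Order.TTheory GRing.Theory Num.Theory.
Local Open Scope ring_scope.

Section Graph.
(* An undirected (multi)graph: vertices V, edges E, each edge e has
   endpoints (ep e).1 and (ep e).2. *)
Variables (R : realFieldType) (V E : finType) (ep : E -> V * V).

Definition incident (e : E) (v : V) : bool := (v == (ep e).1) || (v == (ep e).2).

Definition cross (S : {set V}) (e : E) : bool := ((ep e).1 \in S) != ((ep e).2 \in S).

Definition adjF (F : {set E}) : rel V :=
  fun u v => [exists e in F, (ep e == (u, v)) || (ep e == (v, u))].

Definition compF (F : {set E}) (v : V) : {set V} := [set u | connect (adjF F) v u].

Definition is_comp (F : {set E}) (S : {set V}) : bool := [exists v, S == compF F v].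

Definition between_comps (F : {set E}) (e : E) : bool :=
  ~~ connect (adjF F) (ep e).1 (ep e).2.

Definition load (y : {set V} -> R) (e : E) : R := \sum_(S : {set V} | cross S e) y S.

Definition active (t : V -> R) (F : {set E}) (tau : R) (S : {set V}) : bool :=
  is_comp F S && [exists w in S, tau < t w].

(* Reachable states (forest F, duals y, time tau) of shadow moat growing on (G,t)
   with costs c.  The continuous process is described by its events:
   - add: an edge between different components that is tight is added;
   - grow: time advances by d > 0, every active component S increases y_S by d;
     allowed only when no tight edge between different components is pending,
     when no activity changes strictly inside (tau, tau+d) (no t_w there), and
     when no edge becomes overtight. *)
Inductive moat_reach (c : E -> R) (t : V -> R)
  : {set E} -> ({set V} -> R) -> R -> Prop :=
| moat_start : moat_reach c t set0 (fun _ => 0) 0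
| moat_add F y tau e :
    moat_reach c t F y tau -> between_comps F e -> load y e = c e ->
    moat_reach c t (e |: F) y tau
| moat_grow F y tau d :
    moat_reach c t F y tau -> 0 < d ->
    (forall e, between_comps F e -> load y e < c e) ->
    (forall w, ~ (tau < t w /\ t w < tau + d)) ->
    (forall e, load (fun S => y S + (if active t F tau S then d else 0)) e <= c e) ->
    moat_reach c t F (fun S => y S + (if active t F tau S then d else 0)) (tau + d).

Definition moat_run (c : E -> R) (t : V -> R) (F : {set E}) (y : {set V} -> R) (tau : R) :=
  moat_reach c t F y tau /\ forall S : {set V}, ~~ active t F tau S.

(* Trees in G, given by their edge set T (vertex set = endpoints of T;
   the empty edge set is a single-vertex tree). *)
Definition tvertices (T : {set E}) : {set V} := [set v | [exists e in T, incident e v]].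

Definition is_tree (T : {set E}) : Prop :=
  (forall u v, u \in tvertices T -> v \in tvertices T -> connect (adjF T) u v) /\
  (* acyclic: every edge of T is a bridge of T *)
  (forall e, e \in T -> ~~ connect (adjF (T :\ e)) (ep e).1 (ep e).2).

Definition leaves (T : {set E}) : {set V} :=
  [set v | #|[set e in T | incident e v]| == 1%N].

Definition odot (S A : {set V}) : bool := (S :&: A != set0) && ~~ (A \subset S).

Definition cost (c : E -> R) (F : {set E}) : R := \sum_(e in F) c e.

Definition UC (c : E -> R) (y : {set V} -> R) (F : {set E}) : R :=
  \sum_(e in F) (c e - load y e).

Definition MC (y : {set V} -> R) (F : {set E}) : R :=
  \sum_(S : {set V} | (2 <= #|[set e in F | cross S e]|)%N)
     (#|[set e in F | cross S e]|)%:R * y S.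

Definition UM (c : E -> R) (y : {set V} -> R) (F : {set E}) : R := UC c y F + MC y F.

End Graph.

From mathcomp Require Import all_boot all_order all_algebra.
From mathcomp Require Import ring.
Set Implicit Arguments. Unset Strict Implicit. Unset Printing Implicit Defensive.
Import Order.TTheory GRing.Theory Num.Theory.
Local Open Scope ring_scope.

(** Summing the loads over the edges of T gives
    UC(T) = c(T) - sum_S |delta(S) cap T| y_S, and the sets cut at least twice
    are exactly those counted in MC(T), so UM(T) = c(T) - sum_S y_S over the S
    cut by exactly one tree edge e.  Removing e splits T into two subtrees, one
    on each side of S, and each contains a leaf of T (walk away from e until
    stuck), so S (.) S'. *)

Lemma connect_sub_from (T : finType) (e e' : rel T) (x : T) :
  (forall u w, connect e x u -> e u w -> connect e' u w) ->
  forall z, connect e x z -> connect e' x z.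
Proof.
move=> sub_ee' z /connectP [p]; elim/last_ind: p z => [|p u IHp] z /=.
  by move=> _ ->.
rewrite rcons_path last_rcons => /andP[xp pu] ->.
apply: connect_trans (IHp _ xp erefl) _.
by apply: sub_ee' pu; apply/connectP; exists p.
Qed.

Section TreeCuts.
Variables (V E : finType) (ep : E -> V * V).

Definition cut_size (F : {set E}) (S : {set V}) : nat :=
  #|[set e in F | cross ep S e]|.

Lemma adjF_sym (F : {set E}) : symmetric (adjF ep F).
Proof.
move=> u v; apply/existsP/existsP => -[e /andP[eF h]]; exists e.
all: by rewrite eF /= orbC.
Qed.

Lemma mem_compF (F : {set E}) (v u : V) :
  (u \in compF ep F v) = connect (adjF ep F) v u.
Proof. by rewrite inE. Qed.

Lemma incident_endpoints (e : E) (a : V) :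
  incident ep e a -> exists b, (ep e == (a, b)) || (ep e == (b, a)).
Proof.
rewrite /incident; case: (ep e) => p q /= /orP[] /eqP->.
  by exists q; rewrite eqxx.
by exists p; rewrite eqxx orbT.
Qed.

Section Bridges.
Variable T : {set E}.
Hypothesis bridgeT : forall e, e \in T -> ~~ connect (adjF ep (T :\ e)) (ep e).1 (ep e).2.

Lemma compF_across_edge_proper (e0 f : E) (a b : V) :
  e0 \in T -> incident ep e0 a -> f \in T -> f != e0 ->
  (ep f == (a, b)) || (ep f == (b, a)) ->
  compF ep (T :\ f) b \proper compF ep (T :\ e0) a.
Proof.
move=> e0T e0a fT fe0 fab.
have not_ba : ~~ connect (adjF ep (T :\ f)) b a.
  have := @bridgeT f fT; case/orP: fab => /eqP -> //=.
  by rewrite (sym_connect_sym (adjF_sym _)).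
rewrite properE; apply/andP; split; last first.
  by apply/subsetPn; exists a; rewrite !mem_compF ?connect0.
apply/subsetP => u; rewrite !mem_compF => bu.
have adj_ab : adjF ep (T :\ e0) a b.
  by apply/existsP; exists f; rewrite !inE fe0 fT fab.
apply: connect_trans (connect1 adj_ab) _.
apply: connect_sub_from bu => w z bw /existsP [g /andP[]].
rewrite !inE => /andP[gf gT] gwz.
apply: connect1; apply/existsP; exists g; rewrite !inE gT gwz !andbT.
apply: contraNneq not_ba => ge0.
have [aw|az] : a = w \/ a = z.
  move: e0a gwz; rewrite ge0 /incident; case: (ep e0) => p q /=.
  by case/orP => /eqP-> /orP[] /eqP[? ?]; subst; auto.
  by rewrite aw.
apply: connect_trans bw (connect1 _); rewrite az.
by apply/existsP; exists g; rewrite !inE gf gT gwz.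
Qed.

Lemma exists_leaf_in_compF (e0 : E) (a : V) :
  e0 \in T -> incident ep e0 a ->
  exists2 v, v \in compF ep (T :\ e0) a & v \in leaves ep T.
Proof.
move=> e0T e0a; have [n] := ubnP #|compF ep (T :\ e0) a|.
elim: n e0 a e0T e0a => // n IHn e0 a e0T e0a size_comp.
have [a_leaf|] := eqVneq #|[set e in T | incident ep e a]| 1%N.
  by exists a; rewrite ?mem_compF ?connect0 // inE a_leaf.
move=> a_not_leaf.
have /set0Pn [f] : [set e in T | incident ep e a] :\ e0 != set0.
  apply: contraNneq a_not_leaf => edges_a.
  by rewrite (cardsD1 e0) edges_a cards0 inE e0T e0a.
rewrite !inE => /andP[fe0 /andP[fT fa]].
have [b fab] := incident_endpoints fa.
have fb : incident ep f b.
  by rewrite /incident; case/orP: fab => /eqP -> /=; rewrite eqxx ?orbT.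
have deeper := compF_across_edge_proper e0T e0a fT fe0 fab.
have [|v bv v_leaf] := IHn f b fT fb.
  by apply: leq_trans (proper_card deeper) _; rewrite -ltnS.
have /properP[sub_comp _] := deeper.
by exists v => //; apply: (subsetP sub_comp).
Qed.

End Bridges.

Lemma single_cut_odot (T : {set E}) (S : {set V}) :
  is_tree ep T -> cut_size T S = 1%N -> odot S (leaves ep T).
Proof.
move=> [_ bridgeT] /eqP /cards1P [e0 cutS].
have : e0 \in [set e in T | cross ep S e] by rewrite cutS set11.
rewrite inE => /andP[e0T e0S].
have S_closed : closed (adjF ep (T :\ e0)) (mem S).
  move=> u w /existsP [g /andP[]]; rewrite !inE => /andP[ge0 gT] guw.
  have : ~~ cross ep S g.
    apply: contra ge0 => gS.
    have : g \in [set e in T | cross ep S e] by rewrite inE gT gS.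
    by rewrite cutS inE.
  rewrite /cross negbK => /eqP.
  by case/orP: guw => /eqP -> /=.
have e0_1 : incident ep e0 (ep e0).1 by rewrite /incident eqxx.
have e0_2 : incident ep e0 (ep e0).2 by rewrite /incident eqxx orbT.
have [v1 comp_v1 leaf_v1] := exists_leaf_in_compF bridgeT e0T e0_1.
have [v2 comp_v2 leaf_v2] := exists_leaf_in_compF bridgeT e0T e0_2.
rewrite !mem_compF in comp_v1 comp_v2.
move: e0S; rewrite /cross (closed_connect S_closed comp_v1).
rewrite (closed_connect S_closed comp_v2).
have odot_of x z : x \in S -> z \notin S -> x \in leaves ep T -> z \in leaves ep T ->
    odot S (leaves ep T).
  move=> xS zS x_leaf z_leaf; apply/andP; split.
    by apply/set0Pn; exists x; rewrite inE xS.
  by apply/subsetPn; exists z.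
case: (boolP (v1 \in S)); case: (boolP (v2 \in S)) => // v2S v1S _.
  exact: (odot_of v1 v2).
exact: (odot_of v2 v1).
Qed.

End TreeCuts.

Section Duals.
Variables (R : realFieldType) (V E : finType) (ep : E -> V * V).

Lemma moat_reach_y_ge0 (c : E -> R) (t : V -> R) F y tau :
  moat_reach ep c t F y tau -> forall S, 0 <= y S.
Proof.
elim=> [S|//|{}F {}y {}tau d _ IHy d_gt0 _ _ _ S] //=.
by rewrite addr_ge0 //; case: ifP => // _; rewrite ltW.
Qed.

Lemma sum_load (y : {set V} -> R) (F : {set E}) :
  \sum_(e in F) load ep y e = \sum_(S : {set V}) (cut_size ep F S)%:R * y S.
Proof.
rewrite /load; under eq_bigr do rewrite big_mkcond /=.
rewrite exchange_big /=; apply: eq_bigr => S _.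
rewrite -big_mkcondr /= sumr_const mulr_natl /cut_size.
by congr (_ *+ _); apply: eq_card => e; rewrite inE.
Qed.

Lemma UM_single_cuts (c : E -> R) (y : {set V} -> R) (F : {set E}) :
  UM ep c y F = cost c F - \sum_(S | cut_size ep F S == 1%N) y S.
Proof.
rewrite /UM /UC /MC /cost sumrB sum_load.
rewrite (bigID (fun S => 2 <= cut_size ep F S)%N) /=.
suff -> : \sum_(S | ~~ (2 <= cut_size ep F S)%N) (cut_size ep F S)%:R * y S =
          \sum_(S | cut_size ep F S == 1%N) y S by rewrite /cut_size; ring.
rewrite big_mkcond [RHS]big_mkcond; apply: eq_bigr => S _ /=.
by case: (cut_size ep F S) => [|[|k]]; rewrite ?mul0r ?mul1r.
Qed.

End Duals.

Theorem mainTheorem11 (R : realFieldType) (V E : finType) (ep : E -> V * V)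
  (c : E -> R) (hc : forall e, 0 <= c e) (t : V -> R) (ht : forall v, 0 <= t v)
  (F : {set E}) (y : {set V} -> R) (tau : R)
  (hrun : moat_run ep c t F y tau)
  (T : {set E}) (hT : is_tree ep T) :
  cost c T - \sum_(S : {set V} | odot S (leaves ep T)) y S <= UM ep c y T.
Proof.
have y_ge0 := moat_reach_y_ge0 hrun.1.
rewrite UM_single_cuts lerD2l lerN2 big_mkcond [X in _ <= X]big_mkcond /=.
apply: ler_sum => S _; case: ifP => [/eqP cutS|_]; last by case: ifP.
by rewrite single_cut_odot.
Qed.
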